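(* Let $m+n\ge 3$ and let $\psi:\mathfrak{stl}(m,n,\mathcal A)\to\mathfrak{sl}(m,n,\mathcal A)$ be the homomorphism with $\psi(v_{ij}(a))=E_{ij}(a)$. Then $\operatorname{Ker}\psi\subseteq H$.
   Context: Standing assumptions: $K$ is a field with $\operatorname{char}K\ne 2,3$, and $\mathcal A$ is an associative unital $K$-algebra. For $1\le i,j\le m+n$ put $\tau_{ij}=0$ if $i,j\le m$ or $i,j\ge m+1$, and $\tau_{ij}=1$ otherwise. A Leibniz superalgebra is a $\mathbb Z_2$-graded $K$-space with a bilinear bracket respecting the grading and satisfying $[[a,b],c]=[a,[b,c]]-(-1)^{|a||b|}[b,[a,c]]$. $\mathfrak{gl}(m,n,\mathcal A)$: $(m+n)\times(m+n)$ matrices over $\mathcal A$, matrix unit $E_{ij}(a)$ of degree $\tau_{ij}$, bracket $[X,Y]=XY-(-1)^{\alpha\beta}YX$. $\mathfrak{sl}(m,n,\mathcal A)$ is the subsuperalgebra generated by the $E_{ij}(a)$, $i\ne j$. $\mathfrak{stl}(m,n,\mathcal A)$ is the Leibniz superalgebra generated by $v_{ij}(a)$, $1\le i\ne j\le m+n$, $a\in\mathcal A$, of degree $\tau_{ij}$, subject to: (1) $K$-linearity in $a$; (2) $[v_{ij}(a),v_{kl}(b)]=0$ if $i\ne l$, $j\ne k$; (3) $[v_{ij}(a),v_{kl}(b)]=v_{il}(ab)$ if $i\ne l$, $j=k$; (4) $[v_{ij}(a),v_{kl}(b)]=-(-1)^{\tau_{ij}\tau_{kl}}v_{kj}(ba)$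 if $i=l$, $j\ne k$. For $i\ne j$, $H_{ij}(a,b)=[v_{ij}(a),v_{ji}(b)]$, and $H$ is the $K$-span of all $H_{ij}(a,b)$. *)

From HB Require Import structures.
From mathcomp Require Import all_boot all_order all_algebra.
Set Implicit Arguments. Unset Strict Implicit. Unset Printing Implicit Defensive.
Import GRing.Theory.
Local Open Scope ring_scope.

(* Indices 1..m+n of the paper are 0..m+n-1 here (type 'I_(m+n));
   index i (0-based) is "<= m" in the paper iff i < m. *)

Section Steinberg.
Variables (K : fieldType) (A : algType K) (m n : nat).
Local Notation N := (m + n).

Definition tau (i j : 'I_N) : bool := (i < m)%N != (j < m)%N.

Definition ssign (d e : bool) : K := if d && e then -1 else 1.

(* Terms of the free (non-associative) K-algebra on the generators v_ij(a), i<>j *)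
Inductive term : Type :=
| Gen (i j : 'I_N) of i != j & A
| Zero
| Add of term & term
| Scale of K & term
| Br of term & term.

Inductive hdeg : term -> bool -> Prop :=
| hdeg_gen i j (h : i != j) a : hdeg (Gen h a) (tau i j)
| hdeg_zero d : hdeg Zero d
| hdeg_add t s d : hdeg t d -> hdeg s d -> hdeg (Add t s) d
| hdeg_scale c t d : hdeg t d -> hdeg (Scale c t) d
| hdeg_br t s d e : hdeg t d -> hdeg s e -> hdeg (Br t s) (addb d e).

(* Two terms are equal in stl(m,n,A) iff they are related by [eqv]. *)
Inductive eqv : term -> term -> Prop :=
| eqv_refl t : eqv t t
| eqv_sym t s : eqv t s -> eqv s t
| eqv_trans t s u : eqv t s -> eqv s u -> eqv t u
| eqv_add t t' s s' : eqv t t' -> eqv s s' -> eqv (Add t s) (Add t' s')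
| eqv_scale c t t' : eqv t t' -> eqv (Scale c t) (Scale c t')
| eqv_br t t' s s' : eqv t t' -> eqv s s' -> eqv (Br t s) (Br t' s')
| eqv_addA t s u : eqv (Add t (Add s u)) (Add (Add t s) u)
| eqv_addC t s : eqv (Add t s) (Add s t)
| eqv_add0 t : eqv (Add Zero t) t
| eqv_addN t : eqv (Add t (Scale (-1) t)) Zero
| eqv_scaleDr c t s : eqv (Scale c (Add t s)) (Add (Scale c t) (Scale c s))
| eqv_scaleDl c d t : eqv (Scale (c + d) t) (Add (Scale c t) (Scale d t))
| eqv_scaleA c d t : eqv (Scale c (Scale d t)) (Scale (c * d) t)
| eqv_scale1 t : eqv (Scale 1 t) t
| eqv_brDl t s u : eqv (Br (Add t s) u) (Add (Br t u) (Br s u))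
| eqv_brDr t s u : eqv (Br u (Add t s)) (Add (Br u t) (Br u s))
| eqv_brZl c t u : eqv (Br (Scale c t) u) (Scale c (Br t u))
| eqv_brZr c t u : eqv (Br u (Scale c t)) (Scale c (Br u t))
| eqv_leibniz a b c d e f : hdeg a d -> hdeg b e -> hdeg c f ->
    eqv (Br (Br a b) c)
        (Add (Br a (Br b c)) (Scale (- ssign d e) (Br b (Br a c))))
| eqv_genD i j (h : i != j) a b : eqv (Gen h (a + b)) (Add (Gen h a) (Gen h b))
| eqv_genZ i j (h : i != j) c a : eqv (Gen h (c *: a)) (Scale c (Gen h a))
| eqv_rel2 i j k l (hij : i != j) (hkl : k != l) a b :
    i != l -> j != k -> eqv (Br (Gen hij a) (Gen hkl b)) Zero
| eqv_rel3 i j k l (hij : i != j) (hkl : k != l) (hil : i != l) a b :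
    j = k -> eqv (Br (Gen hij a) (Gen hkl b)) (Gen hil (a * b))
| eqv_rel4 i j k l (hij : i != j) (hkl : k != l) (hkj : k != j) a b :
    i = l -> eqv (Br (Gen hij a) (Gen hkl b))
                 (Scale (- ssign (tau i j) (tau k l)) (Gen hkj (b * a))).

Definition Emx (i j : 'I_N) (a : A) : 'M[A]_N :=
  \matrix_(k, l) (if (k == i) && (l == j) then a else 0).

Definition scalemx (c : K) (X : 'M[A]_N) : 'M[A]_N := map_mx (fun x => c *: x) X.

Definition parmx (d : bool) (X : 'M[A]_N) : 'M[A]_N :=
  \matrix_(k, l) (if tau k l == d then X k l else 0).

(* super bracket [X,Y] = XY - (-1)^{|X||Y|} YX, extended bilinearly *)
Definition sbr (X Y : 'M[A]_N) : 'M[A]_N :=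
  \sum_(d : bool) \sum_(e : bool)
     (parmx d X *m parmx e Y - scalemx (ssign d e) (parmx e Y *m parmx d X)).

Fixpoint psi (t : term) : 'M[A]_N :=
  match t with
  | @Gen i j _ a => Emx i j a
  | Zero => 0
  | Add t s => psi t + psi s
  | Scale c t => scalemx c (psi t)
  | Br t s => sbr (psi t) (psi s)
  end.

Inductive inH : term -> Prop :=
| inH_gen i j (hij : i != j) (hji : j != i) a b : inH (Br (Gen hij a) (Gen hji b))
| inH_zero : inH Zero
| inH_add t s : inH t -> inH s -> inH (Add t s)
| inH_scale c t : inH t -> inH (Scale c t).

End Steinberg.

From Pilot Require Import Defs.
From mathcomp Require Import all_boot all_order all_algebra.
Set Implicit Arguments. Unset Strict Implicit. Unset Printing Implicit Defensive.
Import GRing.Theory.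
Local Open Scope ring_scope.

(* psi is well defined since homogeneous supermatrices satisfy the super Leibniz
   identity and relations (1)-(4). As m + n >= 3, every generator factors as
   v_kl(c) = [v_kr(c), v_rl(1)] with r outside {k, l}; with this and the Leibniz
   identity, brackets of generators and of elements H_ij(a,b) fall back into their
   span, so every element of stl is sum_(i<>j) v_ij(f_ij) + h with h in H. Since
   psi(H) is diagonal, the (i,j) entry of its image is f_ij, and an element of
   Ker psi is therefore h itself. *)

Inductive zexpr := ZAtom of nat | ZAdd of zexpr & zexpr | ZOpp of zexpr | ZZero.

Fixpoint zcoef (e : zexpr) (k : nat) : int :=
  match e with
  | ZAtom j => (j == k)%:Z
  | ZAdd e1 e2 => zcoef e1 k + zcoef e2 k
  | ZOpp e1 => - zcoef e1 k
  | ZZero => 0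
  end.

Section ZmodNormalization.
Variables (V : zmodType) (atoms : seq V).

Fixpoint zeval (e : zexpr) : V :=
  match e with
  | ZAtom j => atoms`_j
  | ZAdd e1 e2 => zeval e1 + zeval e2
  | ZOpp e1 => - zeval e1
  | ZZero => 0
  end.

(* Atoms out of range evaluate to the default [0], so no well-formedness is needed. *)
Lemma zeval_coef e : zeval e = \sum_(k < size atoms) atoms`_k *~ zcoef e k.
Proof.
elim: e => [j|e1 IH1 e2 IH2|e1 IH1|] /=.
- have [lt_j|ge_j] := ltnP j (size atoms).
    rewrite (bigD1 (Ordinal lt_j)) //= eqxx mulr1z big1 ?addr0 // => k.
    by rewrite -(inj_eq val_inj) eq_sym => /negbTE /= ->; rewrite mulr0z.
  rewrite nth_default // big1 // => k _.
  by rewrite gtn_eqF ?mulr0z // (leq_trans (ltn_ord k)).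
- by rewrite IH1 IH2 -big_split; apply: eq_bigr => k _; rewrite mulrzDr.
- by rewrite IH1 -sumrN; apply: eq_bigr => k _; rewrite mulrNz.
- by rewrite big1 // => k _; rewrite mulr0z.
Qed.

Lemma zeval_eq e1 e2 :
  all (fun k => zcoef e1 k == zcoef e2 k) (iota 0 (size atoms)) ->
  zeval e1 = zeval e2.
Proof.
move=> /allP same; rewrite !zeval_coef; apply: eq_bigr => k _.
by rewrite (eqP (same k _)) // mem_iota add0n ltn_ord.
Qed.

End ZmodNormalization.

Ltac reify_zexpr atoms t :=
  lazymatch t with
  | (?a + ?b)%R =>
      let ra := reify_zexpr atoms a in let rb := reify_zexpr atoms b in
      constr:(ZAdd ra rb)
  | (- ?a)%R => let ra := reify_zexpr atoms a in constr:(ZOpp ra)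
  | 0%R => constr:(ZZero)
  | _ => let k := atom_index atoms t in constr:(ZAtom k)
  end
with atom_index atoms t :=
  lazymatch atoms with
  | ?a :: ?rest =>
      match tt with
      | _ => let _ := match goal with _ => unify a t end in constr:(0%N)
      | _ => let k := atom_index rest t in constr:(k.+1)
      end
  end.

(* Proves an identity in a Z-module by comparing the integer coefficients of the
   given atoms on both sides; atoms are recognised up to unification, as
   rewriting may leave them in a convertible but syntactically different form. *)
Ltac zmod_solve atoms :=
  lazymatch goal with |- ?l = ?r =>
    let el := reify_zexpr atoms l in let er := reify_zexpr atoms r in
    change (zeval atoms el = zeval atoms er); apply: zeval_eq; vm_compute;
    reflexivity
  end.

Section SuperMatrices.
Variables (K : fieldType) (A : algType K) (m n : nat).
Local Notation N := (m + n).
Local Notation M := 'M[A]_N.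
Local Notation sc := (@Defs.scalemx K A m n).
Local Notation pm := (@parmx K A m n).
Local Notation br := (@sbr K A m n).
Local Notation tau := (@tau m n).
Implicit Types (X Y Z : M) (c : K).

Lemma scalemxE c X : sc c X = c%:A *: X.
Proof. by apply/matrixP=> k l; rewrite !mxE mulr_algl. Qed.

Lemma scalemx_central c X Y : X *m sc c Y = sc c (X *m Y).
Proof.
apply/matrixP=> k l; rewrite !scalemxE !mxE mulr_sumr.
by apply: eq_bigr => r _; rewrite !mxE !mulr_algl scalerAr.
Qed.

Lemma scalemxDr c X Y : sc c (X + Y) = sc c X + sc c Y.
Proof. by rewrite !scalemxE scalerDr. Qed.

Lemma scalemxDl c c' X : sc (c + c') X = sc c X + sc c' X.
Proof. by rewrite !scalemxE scalerDl scalerDl. Qed.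

Lemma scalemxA c c' X : sc c (sc c' X) = sc (c * c') X.
Proof. by rewrite !scalemxE scalerA mulr_algl scalerA. Qed.

Lemma scale1mx X : sc 1 X = X.
Proof. by rewrite scalemxE !scale1r. Qed.

Lemma scaleN1mx X : sc (-1) X = - X.
Proof. by rewrite scalemxE scaleN1r scaleN1r. Qed.

Lemma scaleNmx c X : sc (- c) X = - sc c X.
Proof. by rewrite !scalemxE scaleNr scaleNr. Qed.

Lemma scalemxB c X Y : sc c (X - Y) = sc c X - sc c Y.
Proof. by rewrite !scalemxE scalerBr. Qed.

Lemma scalemxC c c' X : sc c (sc c' X) = sc c' (sc c X).
Proof. by rewrite !scalemxA mulrC. Qed.

Lemma scalemx_sum c I (r : seq I) (F : I -> M) :
  sc c (\sum_(i <- r) F i) = \sum_(i <- r) sc c (F i).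
Proof. by rewrite scalemxE scaler_sumr; under eq_bigr do rewrite -scalemxE. Qed.

Lemma scalemx0 c : sc c 0 = 0.
Proof. by rewrite scalemxE scaler0. Qed.

Lemma scalemx_mull c X Y : sc c X *m Y = sc c (X *m Y).
Proof. by rewrite !scalemxE scalemxAl. Qed.

Lemma parmxD d X Y : pm d (X + Y) = pm d X + pm d Y.
Proof. by apply/matrixP=> k l; rewrite !mxE; case: ifP; rewrite ?addr0. Qed.

Lemma parmxZ d c X : pm d (sc c X) = sc c (pm d X).
Proof.
by apply/matrixP=> k l; rewrite !scalemxE !mxE; case: ifP; rewrite ?mulr0.
Qed.

Lemma sbrDl X Y Z : br (X + Y) Z = br X Z + br Y Z.
Proof.
rewrite /sbr -big_split; apply: eq_bigr => d _; rewrite -big_split.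
apply: eq_bigr => e _; rewrite parmxD mulmxDl mulmxDr scalemxDr opprD.
by rewrite addrACA.
Qed.

Lemma sbrDr X Y Z : br Z (X + Y) = br Z X + br Z Y.
Proof.
rewrite /sbr -big_split; apply: eq_bigr => d _; rewrite -big_split.
apply: eq_bigr => e _; rewrite parmxD mulmxDl mulmxDr scalemxDr opprD.
by rewrite addrACA.
Qed.

Lemma sbrZl c X Y : br (sc c X) Y = sc c (br X Y).
Proof.
rewrite /sbr scalemx_sum; apply: eq_bigr => d _.
rewrite scalemx_sum; apply: eq_bigr => e _.
by rewrite parmxZ scalemx_mull scalemx_central scalemxB scalemxC.
Qed.

Lemma sbrZr c X Y : br Y (sc c X) = sc c (br Y X).
Proof.
rewrite /sbr scalemx_sum; apply: eq_bigr => d _.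
rewrite scalemx_sum; apply: eq_bigr => e _.
by rewrite parmxZ scalemx_mull scalemx_central scalemxB scalemxC.
Qed.

Definition homog (d : bool) X := forall k l, tau k l != d -> X k l = 0.

Lemma parmx_homog d e X : homog d X -> pm e X = if e == d then X else 0.
Proof.
move=> hX; apply/matrixP=> k l; rewrite !mxE.
have [-> | ne] := eqVneq e d; first by case: eqP => // /eqP /hX ->.
by case: eqP => [tkl|_]; rewrite ?mxE // hX // tkl.
Qed.

Lemma sbrE d e X Y : homog d X -> homog e Y ->
  br X Y = X *m Y - sc (ssign K d e) (Y *m X).
Proof.
move=> hX hY; rewrite /sbr !big_bool /= !(parmx_homog _ hX) !(parmx_homog _ hY).
by case: d {hX}; case: e {hY};
  rewrite /= ?mul0mx ?mulmx0 ?scalemx0 ?subr0 ?add0r ?addr0.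
Qed.

Lemma homog0 d : homog d 0.
Proof. by move=> k l _; rewrite mxE. Qed.

Lemma homogD d X Y : homog d X -> homog d Y -> homog d (X + Y).
Proof. by move=> hX hY k l h; rewrite mxE hX ?hY ?addr0. Qed.

Lemma homogN d X : homog d X -> homog d (- X).
Proof. by move=> hX k l h; rewrite mxE hX ?oppr0. Qed.

Lemma homogZ d c X : homog d X -> homog d (sc c X).
Proof. by move=> hX k l h; rewrite scalemxE mxE hX ?mulr0. Qed.

Lemma homogM d e X Y : homog d X -> homog e Y -> homog (d (+) e) (X *m Y).
Proof.
move=> hX hY k l h; rewrite mxE big1 // => r _.
have [tkr|/hX -> ] := eqVneq (tau k r) d; last by rewrite mul0r.
have [trl|/hY -> ] := eqVneq (tau r l) e; last by rewrite mulr0.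
by move: h; rewrite /Defs.tau -tkr -trl /Defs.tau; case: (k < m)%N; case: (r < m)%N;
  case: (l < m)%N.
Qed.

Lemma homog_sbr d e X Y : homog d X -> homog e Y -> homog (d (+) e) (br X Y).
Proof.
move=> hX hY; rewrite (sbrE hX hY); apply: homogD; first exact: homogM.
by apply/homogN/homogZ; rewrite addbC; apply: homogM.
Qed.

Lemma sbr_leibniz d e f X Y Z : homog d X -> homog e Y -> homog f Z ->
  br (br X Y) Z = br X (br Y Z) + sc (- ssign K d e) (br Y (br X Z)).
Proof.
move=> hX hY hZ.
have hXY := homog_sbr hX hY; have hYZ := homog_sbr hY hZ.
have hXZ := homog_sbr hX hZ.
rewrite (sbrE hXY hZ) (sbrE hX hYZ) (sbrE hY hXZ) (sbrE hX hY) (sbrE hY hZ)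
  (sbrE hX hZ).
clear hX hY hZ hXY hYZ hXZ; case: d; case: e; case: f;
  rewrite /ssign /= ?opprK ?scale1mx ?scaleN1mx
    !(mulmxDl, mulmxDr, mulmxN, mulNmx, mulmxA, opprD, opprK);
  zmod_solve [:: X *m Y *m Z; X *m Z *m Y; Y *m X *m Z; Y *m Z *m X;
                 Z *m X *m Y; Z *m Y *m X].
Qed.

End SuperMatrices.

Section Representation.
Variables (K : fieldType) (A : algType K) (m n : nat).
Local Notation sc := (@Defs.scalemx K A m n).
Local Notation Emx := (@Defs.Emx K A m n).
Local Notation term := (@term K A m n).

Lemma EmxD i j a b : Emx i j (a + b) = Emx i j a + Emx i j b.
Proof. by apply/matrixP=> k l; rewrite !mxE; case: ifP; rewrite ?addr0. Qed.

Lemma EmxZ i j (c : K) a : Emx i j (c *: a) = sc c (Emx i j a).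
Proof.
by apply/matrixP=> k l; rewrite scalemxE !mxE mulr_algl; case: ifP; rewrite ?scaler0.
Qed.

Lemma EmxM i j k l a b :
  Emx i j a *m Emx k l b = if j == k then Emx i l (a * b) else 0.
Proof.
apply/matrixP=> p q; rewrite !mxE (bigD1 j) //= big1 ?addr0; last first.
  by move=> r /negbTE jNr; rewrite !mxE jNr andbF mul0r.
rewrite !mxE eqxx andbT; have [_|jNk] := eqVneq j k; last by rewrite mxE mulr0.
by rewrite mxE; case: (p == i); case: (q == l); rewrite ?mul0r ?mulr0.
Qed.

Lemma homog_Emx i j a : homog (tau i j) (Emx i j a).
Proof.
by move=> k l; rewrite mxE; case: ifP => // /andP[/eqP-> /eqP->]; rewrite eqxx.
Qed.

Lemma sbr_Emx i j k l a b : sbr (Emx i j a) (Emx k l b) =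
  (if j == k then Emx i l (a * b) else 0)
  - sc (ssign K (tau i j) (tau k l)) (if l == i then Emx k j (b * a) else 0).
Proof. by rewrite (sbrE (@homog_Emx i j a) (@homog_Emx k l b)) !EmxM. Qed.

Lemma psi_homog (t : term) d : hdeg t d -> homog d (psi t).
Proof.
elim=> {t d} /= [i j _ a | d | t s d _ ht _ hs | c t d _ ht | t s d e _ ht _ hs].
- exact: homog_Emx.
- exact: homog0.
- exact: homogD.
- exact: homogZ.
- exact: homog_sbr.
Qed.

Lemma psi_eqv (t s : term) : eqv t s -> psi t = psi s.
Proof.
elim=> {t s} /=; try by move=> *; congruence.
- by move=> *; apply: addrA.
- by move=> *; apply: addrC.
- by move=> *; apply: add0r.
- by move=> t; rewrite scaleN1mx subrr.
- by move=> *; apply: scalemxDr.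
- by move=> *; apply: scalemxDl.
- by move=> *; apply: scalemxA.
- by move=> *; apply: scale1mx.
- by move=> *; apply: sbrDl.
- by move=> *; apply: sbrDr.
- by move=> *; apply: sbrZl.
- by move=> *; apply: sbrZr.
- move=> a b c d e f ha hb hc.
  exact: sbr_leibniz (psi_homog ha) (psi_homog hb) (psi_homog hc).
- by move=> *; apply: EmxD.
- by move=> *; apply: EmxZ.
- move=> i j k l _ _ a b iNl jNk.
  by rewrite sbr_Emx (negbTE jNk) eq_sym (negbTE iNl) scalemx0 subrr.
- move=> i j k l _ _ iNl a b <-.
  by rewrite sbr_Emx eqxx eq_sym (negbTE iNl) scalemx0 subr0.
- move=> i j k l _ _ kNj a b ->.
  by rewrite sbr_Emx eqxx eq_sym (negbTE kNj) sub0r scaleNmx.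
Qed.

End Representation.

Section Spans.
Variables (K : fieldType) (A : algType K) (m n : nat).
Local Notation term := (@term K A m n).
Local Notation eqv := (@eqv K A m n).
Local Notation Zero := (@Zero K A m n).
Implicit Types t s u v : term.

Lemma eqv_add0r t : eqv (Add t Zero) t.
Proof. exact: eqv_trans (eqv_addC _ _) (eqv_add0 _). Qed.

Lemma eqv_addl t t' s : eqv t t' -> eqv (Add t s) (Add t' s).
Proof. by move=> e; apply: eqv_add e (eqv_refl _). Qed.

Lemma eqv_addr t s s' : eqv s s' -> eqv (Add t s) (Add t s').
Proof. exact: eqv_add (eqv_refl _). Qed.

Lemma eqv_addACA t s u v :
  eqv (Add (Add t s) (Add u v)) (Add (Add t u) (Add s v)).
Proof.
apply: eqv_trans (eqv_sym (eqv_addA _ _ _)) _.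
apply: eqv_trans (eqv_addr _ (eqv_addA _ _ _)) _.
apply: eqv_trans (eqv_addr _ (eqv_addl _ (eqv_addC _ _))) _.
exact: eqv_trans (eqv_addr _ (eqv_sym (eqv_addA _ _ _))) (eqv_addA _ _ _).
Qed.

Lemma eqv_subl t s u : eqv t (Add s u) -> eqv s (Add t (Scale (-1) u)).
Proof.
move=> e; apply: eqv_trans (eqv_sym (eqv_add0r s)) _.
apply: eqv_trans (eqv_addr _ (eqv_sym (eqv_addN u))) _.
exact: eqv_trans (eqv_addA _ _ _) (eqv_addl _ (eqv_sym e)).
Qed.

Lemma eqv_scale0 t : eqv (Scale 0 t) Zero.
Proof.
have e := eqv_scaleDl 0 0 t; rewrite addr0 in e.
exact: eqv_trans (eqv_subl e) (eqv_addN _).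
Qed.

Lemma eqv_scaler0 c : eqv (Scale c Zero) Zero.
Proof.
apply: eqv_trans (eqv_scale c (eqv_sym (eqv_scale0 Zero))) _.
by apply: eqv_trans (eqv_scaleA _ _ _) _; rewrite mulr0; apply: eqv_scale0.
Qed.

Lemma eqv_br0l t : eqv (Br Zero t) Zero.
Proof.
apply: eqv_trans (eqv_br (eqv_sym (eqv_scale0 Zero)) (eqv_refl t)) _.
exact: eqv_trans (eqv_brZl _ _ _) (eqv_scale0 _).
Qed.

Lemma eqv_br0r t : eqv (Br t Zero) Zero.
Proof.
apply: eqv_trans (eqv_br (eqv_refl t) (eqv_sym (eqv_scale0 Zero))) _.
exact: eqv_trans (eqv_brZr _ _ _) (eqv_scale0 _).
Qed.

Lemma eqv_gen0 i j (h : i != j) : eqv (Gen h 0) Zero.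
Proof.
have e := @eqv_genZ K A m n i j h 0 0; rewrite scaler0 in e.
exact: eqv_trans e (eqv_scale0 _).
Qed.

Inductive spanned (P : term -> Prop) : term -> Prop :=
| spanned_gen t : P t -> spanned P t
| spanned_zero : spanned P Zero
| spanned_add t s : spanned P t -> spanned P s -> spanned P (Add t s)
| spanned_scale c t : spanned P t -> spanned P (Scale c t)
| spanned_eqv t s : eqv t s -> spanned P s -> spanned P t.

Lemma spanned_mono (P Q : term -> Prop) t :
  (forall g, P g -> Q g) -> spanned P t -> spanned Q t.
Proof.
move=> PQ; elim=> {t} [t /PQ|||c t _|t s e _]; last exact: spanned_eqv e.
- exact: spanned_gen.
- exact: spanned_zero.
- by move=> t s _ ht _ hs; apply: spanned_add.
- exact: spanned_scale.
Qed.

Lemma spanned_br (P Q R : term -> Prop) t s :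
  (forall x y, P x -> Q y -> spanned R (Br x y)) ->
  spanned P t -> spanned Q s -> spanned R (Br t s).
Proof.
move=> PQR ht hs; elim: ht => {t} [t Pt||t1 t2 _ h1 _ h2|c t _ h|t t' e _ h].
- elim: hs => {s} [s Qs||s1 s2 _ h1 _ h2|c s _ h|s s' e _ h].
  + exact: PQR.
  + exact: spanned_eqv (eqv_br0r _) (spanned_zero _).
  + exact: spanned_eqv (eqv_brDr _ _ _) (spanned_add h1 h2).
  + exact: spanned_eqv (eqv_brZr _ _ _) (spanned_scale _ h).
  + exact: spanned_eqv (eqv_br (eqv_refl _) e) h.
- exact: spanned_eqv (eqv_br0l _) (spanned_zero _).
- exact: spanned_eqv (eqv_brDl _ _ _) (spanned_add h1 h2).
- exact: spanned_eqv (eqv_brZl _ _ _) (spanned_scale _ h).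
- exact: spanned_eqv (eqv_br e (eqv_refl _)) h.
Qed.

Section Leibniz.
Variables (P : term -> Prop) (a b c : term) (d e f : bool).
Hypotheses (ha : hdeg a d) (hb : hdeg b e) (hc : hdeg c f).

Lemma spanned_br_brl :
  spanned P (Br a (Br b c)) -> spanned P (Br b (Br a c)) ->
  spanned P (Br (Br a b) c).
Proof.
move=> h1 h2; apply: spanned_eqv (eqv_leibniz ha hb hc) _.
exact: spanned_add h1 (spanned_scale _ h2).
Qed.

Lemma spanned_br_brr :
  spanned P (Br (Br a b) c) -> spanned P (Br b (Br a c)) ->
  spanned P (Br a (Br b c)).
Proof.
move=> h1 h2; apply: spanned_eqv (eqv_subl (eqv_leibniz ha hb hc)) _.
exact: spanned_add h1 (spanned_scale _ (spanned_scale _ h2)).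
Qed.

End Leibniz.

End Spans.

Lemma exists_third_index N (i j : 'I_N) : (3 <= N)%N ->
  exists r : 'I_N, r != i /\ r != j.
Proof.
move=> N3; have /subsetPn[r _] : ~~ ([set: 'I_N] \subset [set i; j]).
  apply/negP=> /subset_leq_card; rewrite cardsT card_ord cards2.
  by apply/negP; rewrite -ltnNge (leq_trans _ N3) // ltnS; case: (i != j).
by rewrite !inE negb_or => /andP[rNi rNj]; exists r.
Qed.

Ltac index_tauto :=
  repeat match goal with
  | |- ~ _ => intro
  | |- forall _, _ => intro
  | H : is_true (_ != _) |- _ => move/eqP: H => H
  | H : _ /\ _ |- _ => destruct H
  | H : _ \/ _ |- _ => destruct H
  | H : ?f ?x ?y |- _ => progress (cbv beta in H)
  end; subst; first [tauto | firstorder congruence].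

Section Spanning.
Variables (K : fieldType) (A : algType K) (m n : nat).
Local Notation N := (m + n).
Local Notation term := (@term K A m n).
Local Notation eqv := (@eqv K A m n).
Local Notation Gen := (@Gen K A m n).
Local Notation spanned := (@spanned K A m n).

Definition gen_with (P : 'I_N -> 'I_N -> Prop) (g : term) :=
  exists i j (h : i != j) a, g = Gen h a /\ P i j.

Definition is_gen := gen_with (fun _ _ => True).

Definition is_Hgen (g : term) :=
  exists i j (h : i != j) (h' : j != i) a b, g = Br (Gen h a) (Gen h' b).

Definition gen_or_H g := is_gen g \/ is_Hgen g.

Lemma gen_with_gen P g : gen_with P g -> is_gen g.
Proof. by case=> i [j [h [a [-> _]]]]; exists i, j, h, a. Qed.

Lemma spanned_gen_or_H t : spanned is_gen t -> spanned gen_or_H t.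
Proof. by apply: spanned_mono => g; left. Qed.

Lemma hdeg_Hgen i j (h : i != j) (h' : j != i) a b :
  hdeg (Br (Gen h a) (Gen h' b)) (tau i j (+) tau j i).
Proof. exact: hdeg_br (hdeg_gen _ _) (hdeg_gen _ _). Qed.

Lemma spanned_br_gens p q r s (h1 : p != q) (h2 : r != s) x y :
  ~ (p = s /\ q = r) ->
  spanned (gen_with (fun a b => (a = p /\ b = s /\ q = r) \/ (a = r /\ b = q /\ p = s)))
    (Br (Gen h1 x) (Gen h2 y)).
Proof.
move=> not_H; have [qr|qNr] := eqVneq q r.
  have pNs : p != s by apply/eqP => ps; apply: not_H.
  apply: spanned_eqv (eqv_rel3 h1 h2 pNs x y qr) _.
  by apply: spanned_gen; exists p, s, pNs, (x * y); split => //; left.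
have [ps|pNs] := eqVneq p s.
  have rNq : r != q by rewrite eq_sym.
  apply: spanned_eqv (eqv_rel4 h1 h2 rNq x y ps) (spanned_scale _ _).
  by apply: spanned_gen; exists r, q, rNq, (y * x); split => //; right.
exact: spanned_eqv (eqv_rel2 h1 h2 x y pNs qNr) (spanned_zero _).
Qed.

Lemma spanned_br_gen_gen p q r s (h1 : p != q) (h2 : r != s) x y :
  spanned gen_or_H (Br (Gen h1 x) (Gen h2 y)).
Proof.
have [ps|pNs] := eqVneq p s; have [qr|qNr] := eqVneq q r.
- by subst s r; apply: spanned_gen; right; exists p, q, h1, h2, x, y.
all: apply/spanned_gen_or_H/(spanned_mono (@gen_with_gen _)).
all: by apply: spanned_br_gens; index_tauto.
Qed.

Lemma spanned_br_gen_l i j (hij : i != j) x (P : 'I_N -> 'I_N -> Prop) t :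
  (forall a b, P a b -> ~ (i = b /\ j = a)) ->
  spanned (gen_with P) t -> spanned is_gen (Br (Gen hij x) t).
Proof.
move=> PNji; apply: (spanned_br (P := fun g => g = Gen hij x)).
- move=> _ y -> [k [l [h [a [-> Pkl]]]]].
  exact/(spanned_mono (@gen_with_gen _))/spanned_br_gens/PNji.
- exact: spanned_gen.
Qed.

Lemma spanned_br_gen_r k l (hkl : k != l) y (P : 'I_N -> 'I_N -> Prop) t :
  (forall a b, P a b -> ~ (a = l /\ b = k)) ->
  spanned (gen_with P) t -> spanned is_gen (Br t (Gen hkl y)).
Proof.
move=> PNlk ht; apply: (spanned_br (Q := fun g => g = Gen hkl y) _ ht).
- move=> _ _ [i [j [h [a [-> Pij]]]]] ->.
  exact/(spanned_mono (@gen_with_gen _))/spanned_br_gens/PNlk.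
- exact: spanned_gen.
Qed.

Lemma spanned_br_Hgen_gen_off i j (h : i != j) (h' : j != i) a b k l
    (hkl : k != l) c :
  ~ (k = i /\ l = j) -> ~ (k = j /\ l = i) ->
  spanned is_gen (Br (Br (Gen h a) (Gen h' b)) (Gen hkl c)).
Proof.
move=> not_ij not_ji.
apply: spanned_br_brl (hdeg_gen h a) (hdeg_gen h' b) (hdeg_gen hkl c) _ _.
- by apply: spanned_br_gen_l (spanned_br_gens h' hkl b c _); index_tauto.
- by apply: spanned_br_gen_l (spanned_br_gens h hkl a c _); index_tauto.
Qed.

Lemma spanned_br_gen_Hgen_off i j (h : i != j) (h' : j != i) a b k l
    (hkl : k != l) c :
  ~ (k = i /\ l = j) -> ~ (k = j /\ l = i) ->
  spanned is_gen (Br (Gen hkl c) (Br (Gen h a) (Gen h' b))).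
Proof.
move=> not_ij not_ji.
apply: spanned_br_brr (hdeg_gen hkl c) (hdeg_gen h a) (hdeg_gen h' b) _ _.
- by apply: spanned_br_gen_r (spanned_br_gens hkl h c a _); index_tauto.
- by apply: spanned_br_gen_l (spanned_br_gens hkl h' c b _); index_tauto.
Qed.

End Spanning.

Section SpanningAll.
Variables (K : fieldType) (A : algType K) (m n : nat).
Hypothesis hmn : (3 <= m + n)%N.
Local Notation N := (m + n).
Local Notation term := (@term K A m n).
Local Notation eqv := (@eqv K A m n).
Local Notation Gen := (@Gen K A m n).
Local Notation spanned := (@spanned K A m n).
Local Notation is_gen := (@is_gen K A m n).
Local Notation gen_or_H := (@gen_or_H K A m n).

Lemma index_pair_cases (i j k l : 'I_N) :
  (k = i /\ l = j \/ k = j /\ l = i) \/ (~ (k = i /\ l = j) /\ ~ (k = j /\ l = i)).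
Proof. by case: (eqVneq k i); case: (eqVneq l j); case: (eqVneq k j);
  case: (eqVneq l i); index_tauto. Qed.

Lemma eqv_gen_split k l (hkl : k != l) c r (hkr : k != r) (hrl : r != l) :
  eqv (Gen hkl c) (Br (Gen hkr c) (Gen hrl 1)).
Proof.
have e := eqv_rel3 hkr hrl hkl c 1 (erefl r); rewrite mulr1 in e.
exact: eqv_sym e.
Qed.

Lemma spanned_br_Hgen_gen i j (h : i != j) (h' : j != i) a b k l (hkl : k != l) c :
  spanned gen_or_H (Br (Br (Gen h a) (Gen h' b)) (Gen hkl c)).
Proof.
have [special|[not_ij not_ji]] := index_pair_cases i j k l; last first.
  exact/spanned_gen_or_H/spanned_br_Hgen_gen_off.
have [r [rNk rNl]] := exists_third_index k l hmn.
have kNr : k != r by rewrite eq_sym.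
apply: spanned_eqv (eqv_br (eqv_refl _) (eqv_gen_split hkl c kNr rNl)) _.
apply: spanned_br_brr (hdeg_Hgen h h' a b) (hdeg_gen kNr c) (hdeg_gen rNl 1) _ _.
- apply: (spanned_br (P := is_gen) (Q := fun g => g = Gen rNl 1)).
  + by move=> _ _ [p [q [hpq [d [-> _]]]]] ->; apply: spanned_br_gen_gen.
  + by apply: spanned_br_Hgen_gen_off; index_tauto.
  + exact: spanned_gen.
- apply: (spanned_br (P := fun g => g = Gen kNr c) (Q := is_gen)).
  + by move=> _ _ -> [p [q [hpq [d [-> _]]]]]; apply: spanned_br_gen_gen.
  + exact: spanned_gen.
  + by apply: spanned_br_Hgen_gen_off; index_tauto.
Qed.

Lemma spanned_br_gen_Hgen i j (h : i != j) (h' : j != i) a b k l (hkl : k != l) c :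
  spanned gen_or_H (Br (Gen hkl c) (Br (Gen h a) (Gen h' b))).
Proof.
have [special|[not_ij not_ji]] := index_pair_cases i j k l; last first.
  exact/spanned_gen_or_H/spanned_br_gen_Hgen_off.
have [r [rNk rNl]] := exists_third_index k l hmn.
have kNr : k != r by rewrite eq_sym.
apply: spanned_eqv (eqv_br (eqv_gen_split hkl c kNr rNl) (eqv_refl _)) _.
apply: spanned_br_brl (hdeg_gen kNr c) (hdeg_gen rNl 1) (hdeg_Hgen h h' a b) _ _.
- apply: (spanned_br (P := fun g => g = Gen kNr c) (Q := is_gen)).
  + by move=> _ _ -> [p [q [hpq [d [-> _]]]]]; apply: spanned_br_gen_gen.
  + exact: spanned_gen.
  + by apply: spanned_br_gen_Hgen_off; index_tauto.
- apply: (spanned_br (P := fun g => g = Gen rNl 1) (Q := is_gen)).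
  + by move=> _ _ -> [p [q [hpq [d [-> _]]]]]; apply: spanned_br_gen_gen.
  + exact: spanned_gen.
  + by apply: spanned_br_gen_Hgen_off; index_tauto.
Qed.

Lemma spanned_br_Hgen_Hgen i j (h : i != j) (h' : j != i) a b
    k l (hkl : k != l) (hlk : l != k) c d :
  spanned gen_or_H (Br (Br (Gen h a) (Gen h' b)) (Br (Gen hkl c) (Gen hlk d))).
Proof.
apply: spanned_br_brr (hdeg_Hgen h h' a b) (hdeg_gen hkl c) (hdeg_gen hlk d) _ _.
- apply: (spanned_br (P := gen_or_H) (Q := fun g => g = Gen hlk d)).
  + move=> _ _ [[p [q [hpq [e [-> _]]]]] | [p [q [hpq [hqp [e [f ->]]]]]]] ->.
      exact: spanned_br_gen_gen.
    exact: spanned_br_Hgen_gen.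
  + exact: spanned_br_Hgen_gen.
  + exact: spanned_gen.
- apply: (spanned_br (P := fun g => g = Gen hkl c) (Q := gen_or_H)).
  + move=> _ _ -> [[p [q [hpq [e [-> _]]]]] | [p [q [hpq [hqp [e [f ->]]]]]]].
      exact: spanned_br_gen_gen.
    exact: spanned_br_gen_Hgen.
  + exact: spanned_gen.
  + exact: spanned_br_Hgen_gen.
Qed.

Lemma spanned_gen_or_H_all (t : term) : spanned gen_or_H t.
Proof.
elim: t => [i j h a | | t ht s hs | c t ht | t ht s hs].
- by apply: spanned_gen; left; exists i, j, h, a.
- exact: spanned_zero.
- exact: spanned_add.
- exact: spanned_scale.
- apply: spanned_br ht hs => x y.
  move=> [[p [q [hpq [e [-> _]]]]] | [p [q [hpq [hqp [e [f ->]]]]]]]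
         [[p' [q' [hpq' [e' [-> _]]]]] | [p' [q' [hpq' [hqp' [e' [f' ->]]]]]]].
  + exact: spanned_br_gen_gen.
  + exact: spanned_br_gen_Hgen.
  + exact: spanned_br_Hgen_gen.
  + exact: spanned_br_Hgen_Hgen.
Qed.

End SpanningAll.

Section NormalForm.
Variables (K : fieldType) (A : algType K) (m n : nat).
Local Notation N := (m + n).
Local Notation term := (@term K A m n).
Local Notation eqv := (@eqv K A m n).
Local Notation Gen := (@Gen K A m n).
Local Notation Zero := (@Zero K A m n).
Local Notation Emx := (@Defs.Emx K A m n).
Local Notation gen_or_H := (@gen_or_H K A m n).
Local Notation offdiag := {p : 'I_N * 'I_N | p.1 != p.2}.
Implicit Types (L : seq offdiag) (f g : 'I_N -> 'I_N -> A).

Definition gen_sum_seq L f : term :=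
  foldr (fun p t => Add (Gen (proj2_sig p) (f (sval p).1 (sval p).2)) t) Zero L.

Definition gen_sum f := gen_sum_seq (enum {: offdiag}) f.

Lemma eqv_gen_sum0 L f :
  (forall p, p \in L -> f (sval p).1 (sval p).2 = 0) -> eqv (gen_sum_seq L f) Zero.
Proof.
elim: L => [|p L IH] f0 /=; first exact: eqv_refl.
rewrite f0 ?mem_head //; apply: eqv_trans (eqv_add (eqv_gen0 A _) (IH _)) (eqv_add0 _).
by move=> q Lq; apply: f0; rewrite in_cons Lq orbT.
Qed.

Lemma eqv_gen_sumD L f g :
  eqv (Add (gen_sum_seq L f) (gen_sum_seq L g))
      (gen_sum_seq L (fun i j => f i j + g i j)).
Proof.
elim: L => [|p L IH] /=; first exact: eqv_add0.
exact: eqv_trans (eqv_addACA _ _ _ _) (eqv_add (eqv_sym (eqv_genD _ _ _)) IH).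
Qed.

Lemma eqv_gen_sumZ L f (c : K) :
  eqv (Scale c (gen_sum_seq L f)) (gen_sum_seq L (fun i j => c *: f i j)).
Proof.
elim: L => [|p L IH] /=; first exact: eqv_scaler0.
exact: eqv_trans (eqv_scaleDr _ _ _) (eqv_add (eqv_sym (eqv_genZ _ _ _)) IH).
Qed.

Lemma eqv_gen_sum_delta L i j (h : i != j) a : uniq L ->
  eqv (gen_sum_seq L (fun k l => if (k == i) && (l == j) then a else 0))
      (if exist _ (i, j) h \in L then Gen h a else Zero).
Proof.
elim: L => [|p L IH] /=; first by move=> _; apply: eqv_refl.
case/andP=> pNL uL; rewrite in_cons.
have [ep | pNij] /= := eqVneq p (exist _ (i, j) h).
  subst p; rewrite /= !eqxx /=; apply: eqv_trans (eqv_addr _ (IH uL)) _.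
  by rewrite (negbTE pNL); exact (eqv_add0r (Gen h a)).
have -> : ((sval p).1 == i) && ((sval p).2 == j) = false.
  apply/negbTE; apply: contra pNij => /andP[/eqP ei /eqP ej].
  by apply/eqP/val_inj; rewrite /= -ei -ej -surjective_pairing.
exact: eqv_trans (eqv_addl _ (eqv_gen0 A _)) (eqv_trans (eqv_add0 _) (IH uL)).
Qed.

Lemma gen_or_H_normal_form (t : term) : spanned gen_or_H t ->
  exists f h, inH h /\ eqv t (Add (gen_sum f) h).
Proof.
have sum0 : eqv (gen_sum (fun _ _ => 0)) Zero by apply: eqv_gen_sum0.
elim=> {t} [t [[i [j [h [a [-> _]]]]] | [i [j [h [h' [a [b ->]]]]]]] | | t s _
  [f [u [Hu e]]] _ [g [v [Hv e']]] | c t _ [f [u [Hu e]]] | t s e _ [f [u [Hu e']]]].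
- exists (fun k l => if (k == i) && (l == j) then a else 0), Zero.
  split; first exact: inH_zero.
  apply: eqv_trans (eqv_sym (eqv_add0r _)) (eqv_addl _ (eqv_sym _)).
  have := eqv_gen_sum_delta h a (enum_uniq {: offdiag}).
  by rewrite mem_enum.
- exists (fun _ _ => 0), (Br (Gen h a) (Gen h' b)); split; first exact: inH_gen.
  exact: eqv_sym (eqv_trans (eqv_addl _ sum0) (eqv_add0 _)).
- exists (fun _ _ => 0), Zero; split; first exact: inH_zero.
  exact: eqv_sym (eqv_trans (eqv_addl _ sum0) (eqv_add0 _)).
- exists (fun i j => f i j + g i j), (Add u v); split; first exact: inH_add.
  apply: eqv_trans (eqv_add e e') (eqv_trans (eqv_addACA _ _ _ _) _).
  exact: eqv_addl (eqv_gen_sumD _ _ _).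
- exists (fun i j => c *: f i j), (Scale c u); split; first exact: inH_scale.
  apply: eqv_trans (eqv_scale _ e) (eqv_trans (eqv_scaleDr _ _ _) _).
  exact: eqv_addl (eqv_gen_sumZ _ _ _).
- by exists f, u; split=> //; apply: eqv_trans e e'.
Qed.

Lemma psi_gen_sum f k l : k != l -> psi (gen_sum f) k l = f k l.
Proof.
move=> kNl; have -> : psi (gen_sum f) =
    \sum_(p : offdiag) Emx (sval p).1 (sval p).2 (f (sval p).1 (sval p).2).
  rewrite /gen_sum -big_enum.
  by elim: (enum _) => [|p L /= ->]; rewrite ?big_nil ?big_cons.
rewrite summxE (bigD1 (exist _ (k, l) kNl)) //= mxE !eqxx big1 ?addr0 // => p pNkl.
rewrite mxE; case: ifP => // /andP[/eqP ek /eqP el]; case/eqP: pNkl.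
by apply: val_inj; rewrite /= ek el -surjective_pairing.
Qed.

Lemma psi_inH_offdiag (h : term) k l : inH h -> k != l -> psi h k l = 0.
Proof.
move=> Hh kNl; elim: Hh => /= [i j hij hji a b | | t s _ ht _ hs | c t _ ht].
- rewrite sbr_Emx (eqxx i) (eqxx j) !mxE.
  have [ki|_] := eqVneq k i; have [li|_] := eqVneq l i;
  have [kj|_] := eqVneq k j; have [lj|_] := eqVneq l j;
  rewrite /= ?scaler0 ?subr0 //; subst; by rewrite eqxx in kNl.
- by rewrite mxE.
- by rewrite mxE ht hs addr0.
- by rewrite scalemxE mxE ht mulr0.
Qed.

End NormalForm.

Theorem lemma3p3 (K : fieldType) (A : algType K) (m n : nat)
  (hK2 : (2%:R : K) != 0) (hK3 : (3%:R : K) != 0) (hmn : (3 <= m + n)%N) :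
  forall t : term A m n, psi t = 0 ->
    exists h : term A m n, inH h /\ eqv t h.
Proof.
move=> t psi_t0.
have [f [h [Hh e]]] := gen_or_H_normal_form (spanned_gen_or_H_all hmn t).
have f0 k l : k != l -> f k l = 0.
  move=> kNl; move/matrixP/(_ k l): (psi_eqv e).
  by rewrite psi_t0 /= !mxE psi_gen_sum // psi_inH_offdiag // addr0.
exists h; split=> //; apply: eqv_trans e (eqv_trans (eqv_addl _ _) (eqv_add0 _)).
by apply: eqv_gen_sum0 => p _; apply/f0/(valP p).
Qed.
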